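(* Let $H(\mathbb{Z})=\langle a,b \mid [a,b]\text{ is central}\rangle$ be the integer Heisenberg group with generating set $S=\{a,b,a^{-1},b^{-1}\}$, and let $B_n$ be the ball of radius $n$ about $e$ in the word metric. There exists $\epsilon>0$ such that for all sufficiently large $n$, $$\epsilon<\frac{\#\{g\in B_n\smallsetminus\{e\}:\kappa(g)=0\}}{\#B_n}<1-\epsilon,$$ and the same two-sided bound holds with the condition $\kappa(g)=0$ replaced by $\kappa(g)>0$, and also with it replaced by $\kappa(g)<0$.
   Context: For a group $G$ with finite generating set $S$ ($S=S^{-1}$, $e\notin S$), $|x|$ denotes the word length of $x\in G$ with respect to $S$, and $B_n=\{g:|g|\le n\}$. For $g\in G$ define $\mathrm{Av}(g)=\frac{1}{|S|}\sum_{a\in S}|a^{-1}ga|$, and for $g\neq e$ define the curvature $\kappa(g)=\frac{|g|-\mathrm{Av}(g)}{|g|}$. *)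

From HB Require Import structures.
From mathcomp Require Import all_boot all_order all_algebra.
From Stdlib Require Import ClassicalEpsilon.
Set Implicit Arguments. Unset Strict Implicit. Unset Printing Implicit Defensive.
Import Order.TTheory GRing.Theory Num.Theory.

(* Integer Heisenberg group H(Z) = <a,b | [a,b] central>, realized as Z^3 with
   (x,y,z)(x',y',z') = (x+x', y+y', z+z'+x*y'), a = (1,0,0), b = (0,1,0). *)
Definition Heis := (int * int * int)%type.

Definition hmul (g h : Heis) : Heis :=
  let: (x, y, z) := g in let: (x', y', z') := h in
  ((x + x')%R, (y + y')%R, (z + z' + x * y')%R).

Definition hinv (g : Heis) : Heis :=
  let: (x, y, z) := g in ((- x)%R, (- y)%R, (- z + x * y)%R).

Definition he : Heis := (0%R, 0%R, 0%R).
Definition ha : Heis := (1%R, 0%R, 0%R).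
Definition hb : Heis := (0%R, 1%R, 0%R).

Definition S : seq Heis := [:: ha; hb; hinv ha; hinv hb].

Fixpoint ballList (n : nat) : seq Heis :=
  match n with
  | 0 => [:: he]
  | n'.+1 => ballList n' ++ [seq hmul g s | g <- ballList n', s <- S]
  end.

Definition ball (n : nat) : seq Heis := undup (ballList n).

(* Word length |g| = least n with g in B_n (S generates H(Z), so such n exists;
   the fallback 0 is never used). *)
Definition wordlen (g : Heis) : nat :=
  match excluded_middle_informative (exists n, g \in ballList n) with
  | left p => ex_minn p
  | right _ => 0
  end.

Definition Av (g : Heis) : rat :=
  ((\sum_(s <- S) (wordlen (hmul (hinv s) (hmul g s)))%:R) / (size S)%:R)%R.

Definition kappa (g : Heis) : rat :=
  (((wordlen g)%:R - Av g) / (wordlen g)%:R)%R.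

Definition propBall (P : rat -> bool) (n : nat) : rat :=
  ((count (fun g => (g != he) && P (kappa g)) (ball n))%:R / (size (ball n))%:R)%R.

(* Write a = (1,0,0), b = (0,1,0), so that z is a signed area.  The elements
   (x, y, k^2 - k + c) with 0 <= x, y <= k and 0 < c <= k have word length
   exactly 4k - x - y: a word running around a k x k rectangle with a notch
   spells them, and conversely a word with n_a letters a and n_b letters b
   spelling (x, y, z) encloses area z <= n_a n_b, which by AM-GM forces length
   at least 4k - x - y.  Conjugation by a^(+-1), b^(+-1) shifts z by -+y, +-x.
   Hence for t <= x, y < 2t and k >= 5t the curvature is positive when c <= t
   (two conjugates drop into the shorter band below), negative when c > k - t
   (two conjugates rise into the longer band above) and zero when 2t < c <= 3t
   (all conjugates stay in the band).  Each family has 5t^4 elements in B_(40t),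
   while #B_n = O(n^4); so each proportion is bounded below by a constant, and
   bounded away from 1 by the other two. *)

From mathcomp Require Import all_boot all_order all_algebra.
From mathcomp Require Import zify ring lra.
From Stdlib Require Import ClassicalEpsilon.
Set Implicit Arguments. Unset Strict Implicit. Unset Printing Implicit Defensive.
Import Order.TTheory GRing.Theory Num.Theory.
Local Open Scope ring_scope.

Lemma ballList_ind (P : nat -> Heis -> Prop) :
  P 0%N he ->
  (forall n g, P n g -> P n.+1 g) ->
  (forall n g s, P n g -> s \in S -> P n.+1 (hmul g s)) ->
  forall n g, g \in ballList n -> P n g.
Proof.
move=> P0 Pmono Pmul; elim=> [|n IHn] g; first by rewrite inE => /eqP ->.
rewrite mem_cat => /orP[/IHn/Pmono // | /allpairsP [[g' s] /= [g'n sS ->]]].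
exact: Pmul (IHn _ g'n) sS.
Qed.

Lemma ballList_subset m n : (m <= n)%N -> {subset ballList m <= ballList n}.
Proof.
move=> /subnKC <-; elim: (n - m)%N => [|k IHk] g; first by rewrite addn0.
by move=> gm; rewrite addnS /= mem_cat IHk.
Qed.

Lemma mem_ballList_foldl w g n : all (mem S) w -> g \in ballList n ->
  foldl hmul g w \in ballList (n + size w).
Proof.
elim: w g n => [|s w IHw] g n /=; first by rewrite addn0.
move=> /andP[sS wS] gn; rewrite addnS -addSn; apply: IHw => //.
by rewrite mem_cat; apply/orP; right; apply/allpairsP; exists (g, s).
Qed.

Lemma wordlen_min g n : g \in ballList n -> (wordlen g <= n)%N.
Proof.
rewrite /wordlen; case: excluded_middle_informative => [gB|nogB] gn.
- by case: ex_minnP => m _; apply.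
- by case: nogB; exists n.
Qed.

Lemma mem_ballList_wordlen g n : g \in ballList n -> g \in ballList (wordlen g).
Proof.
rewrite /wordlen; case: excluded_middle_informative => [gB|nogB] gn.
- by case: ex_minnP.
- by case: nogB; exists n.
Qed.

Lemma hinv_ha : hinv ha = (-1, 0, 0). Proof. by []. Qed.
Lemma hinv_hb : hinv hb = (0, -1, 0). Proof. by []. Qed.

Lemma foldl_hmul_nseq_x (u x y z : int) n :
  foldl hmul (x, y, z) (nseq n (u, 0, 0)) = (x + n%:Z * u, y, z).
Proof.
elim: n x y z => [|n IHn] x y z /=; first by congr (_, _, _); ring.
by rewrite IHn intS; congr (_, _, _); ring.
Qed.

Lemma foldl_hmul_nseq_y (v x y z : int) n :
  foldl hmul (x, y, z) (nseq n (0, v, 0)) = (x, y + n%:Z * v, z + n%:Z * v * x).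
Proof.
elim: n x y z => [|n IHn] x y z /=; first by congr (_, _, _); ring.
by rewrite IHn intS; congr (_, _, _); ring.
Qed.

(* The word b^-(P-y) a^(Q-1) b^s a b^(P-s) a^-(Q-x), of length 2(P+Q) - x - y,
   spells (x, y, P*Q - s). *)
Lemma mem_ballList_rect (P Q x y : nat) (z : int) :
  (y <= P)%N -> (x <= Q)%N -> (0 < Q)%N ->
  P%:Z * Q%:Z - P%:Z <= z <= P%:Z * Q%:Z ->
  (x%:Z, y%:Z, z) \in ballList (2 * (P + Q) - x - y)%N.
Proof.
move=> yP xQ Q0 /andP[zlo zhi].
pose s := absz (P%:Z * Q%:Z - z)%R.
pose w := nseq (P - y)%N (hinv hb) ++ nseq Q.-1 ha ++ nseq s hb ++ [:: ha]
          ++ nseq (P - s)%N hb ++ nseq (Q - x)%N (hinv ha).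
have wS : all (mem S) w by rewrite !all_cat !all_nseq /= !inE !eqxx !orbT.
have sizew : size w = (2 * (P + Q) - x - y)%N.
  by rewrite !size_cat !size_nseq /=; lia.
have -> : (x%:Z, y%:Z, z) = foldl hmul he w.
  rewrite !foldl_cat hinv_ha hinv_hb /he /ha /hb.
  rewrite foldl_hmul_nseq_y foldl_hmul_nseq_x foldl_hmul_nseq_y /=.
  by rewrite foldl_hmul_nseq_y foldl_hmul_nseq_x; congr (_, _, _); nia.
by rewrite -sizew -[size w]add0n; apply: mem_ballList_foldl.
Qed.

(* [na], [nA], [nb], [nB] count the letters a, a^-1, b, b^-1 of a word of length
   at most [n] spelling [g]; the x-coordinate stays in [[lo, hi]] along the word,
   and each letter b^(+-1) read at x-coordinate x' adds +-x' to the z-coordinate. *)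
Definition word_shape (n : nat) (g : Heis) : Prop :=
  exists na nA nb nB lo hi : int,
    0 <= na /\ 0 <= nA /\ 0 <= nb /\ 0 <= nB /\
    g.1.1 = na - nA /\ g.1.2 = nb - nB /\ na + nA + nb + nB <= n%:Z /\
    lo <= 0 <= hi /\ lo <= g.1.1 <= hi /\ 2 * (hi - lo) <= na + nA + `|g.1.1| /\
    g.2 <= nb * hi - nB * lo.

Lemma word_shape_ballList n g : g \in ballList n -> word_shape n g.
Proof.
apply: ballList_ind => {n g} [|n g|n [[x y] z] s].
- by exists 0, 0, 0, 0, 0, 0.
- by case=> [na [nA [nb [nB [lo [hi shape]]]]]]; exists na, nA, nb, nB, lo, hi; lia.
case=> [na [nA [nb [nB [lo [hi /= shape]]]]]].
rewrite !inE => /or4P[] /eqP->.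
- have [xhi|xhi] : x < hi \/ x = hi by lia.
  + by exists (na + 1), nA, nb, nB, lo, hi; rewrite /=; nia.
  + by exists (na + 1), nA, nb, nB, lo, (hi + 1); rewrite /=; nia.
- by exists na, nA, (nb + 1), nB, lo, hi; rewrite /=; nia.
- have [xlo|xlo] : lo < x \/ x = lo by lia.
  + by exists na, (nA + 1), nb, nB, lo, hi; rewrite /=; nia.
  + by exists na, (nA + 1), nb, nB, (lo - 1), hi; rewrite /=; nia.
- by exists na, nA, nb, (nB + 1), lo, hi; rewrite /=; nia.
Qed.

Lemma ballList_area_bound (n x y : nat) (z : int) : (x%:Z, y%:Z, z) \in ballList n ->
  exists a b : int, [/\ 0 <= a, 0 <= b, z <= a * b & 2 * (a + b) <= n%:Z + x%:Z + y%:Z].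
Proof.
case/word_shape_ballList=> [na [nA [nb [nB [lo [hi /= shape]]]]]].
exists na, nb; split; try lia.
have width : hi - lo <= na by lia.
have : nB * (- lo) <= nb * (- lo) by apply: ler_wpM2r; lia.
have : nb * (hi - lo) <= nb * na by apply: ler_wpM2l; lia.
nia.
Qed.

Lemma ballList_band_lower (k n x y : nat) (z : int) :
  k%:Z * k%:Z - k%:Z < z -> (x%:Z, y%:Z, z) \in ballList n -> (4 * k <= n + x + y)%N.
Proof.
move=> zk /ballList_area_bound[a [b [a0 b0 zab ab]]].
rewrite leqNgt; apply/negP => small.
have ab_le : a + b <= 2 * k%:Z - 1 by lia.
have : 0 <= (a - b) ^+ 2 by exact: sqr_ge0.
have : 0 <= (2 * k%:Z - 1 - a - b) * (2 * k%:Z - 1 + a + b) by apply: mulr_ge0; lia.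
nia.
Qed.

Lemma ballList_sqr_lower (k n x y : nat) (z : int) :
  k%:Z * k%:Z < z -> (x%:Z, y%:Z, z) \in ballList n -> (4 * k + 2 <= n + x + y)%N.
Proof.
move=> zk /ballList_area_bound[a [b [a0 b0 zab ab]]].
rewrite leqNgt; apply/negP => small.
have ab_le : a + b <= 2 * k%:Z by lia.
have : 0 <= (a - b) ^+ 2 by exact: sqr_ge0.
have : 0 <= (2 * k%:Z - a - b) * (2 * k%:Z + a + b) by apply: mulr_ge0; lia.
nia.
Qed.

Definition band_elt (k x y : nat) (c : int) : Heis := (x%:Z, y%:Z, k%:Z * k%:Z - k%:Z + c).

Lemma mem_ballList_band_elt (k x y : nat) (c : int) : (x <= k)%N -> (y <= k)%N ->
  0 < c <= k%:Z -> band_elt k x y c \in ballList (2 * (k + k) - x - y).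
Proof. by move=> xk yk ck; apply: mem_ballList_rect => //; lia. Qed.

Lemma wordlen_band_elt (k x y : nat) (c : int) : (x <= k)%N -> (y <= k)%N ->
  0 < c <= k%:Z -> (wordlen (band_elt k x y c) + x + y)%N = (4 * k)%N.
Proof.
move=> xk yk ck; have gB := mem_ballList_band_elt xk yk ck.
have /ballList_band_lower/(_ (mem_ballList_wordlen gB)) :
  k%:Z * k%:Z - k%:Z < k%:Z * k%:Z - k%:Z + c by lia.
have := wordlen_min gB; lia.
Qed.

Lemma wordlen_band_elt_below (k x y : nat) (c : int) : (1 < k)%N -> (x < k)%N -> (y <= k)%N ->
  - k%:Z <= c <= 0 -> (wordlen (band_elt k x y c) + x + y + 2 <= 4 * k)%N.
Proof.
move=> k1 xk yk ck.
have gB : band_elt k x y c \in ballList (2 * (k + k.-1) - x - y).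
  by apply: mem_ballList_rect; lia.
have := wordlen_min gB; lia.
Qed.

Lemma wordlen_band_elt_above (k x y : nat) (c : int) : (x <= k)%N -> (y <= k)%N ->
  k%:Z < c <= 2 * k%:Z -> (4 * k + 2 <= wordlen (band_elt k x y c) + x + y)%N.
Proof.
move=> xk yk ck.
have gB : band_elt k x y c \in ballList (2 * (k.+1 + k) - x - y).
  by apply: mem_ballList_rect => //; nia.
have /ballList_sqr_lower/(_ (mem_ballList_wordlen gB)) :
  k%:Z * k%:Z < k%:Z * k%:Z - k%:Z + c by lia.
lia.
Qed.

Lemma hconj (s : Heis) (x y z : int) :
  hmul (hinv s) (hmul (x, y, z) s) = (x, y, z + x * s.1.2 - s.1.1 * y).
Proof. by case: s => [[u v] w]; rewrite /hmul /hinv; congr (_, _, _); ring. Qed.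

Definition conj_len_sum (g : Heis) : nat :=
  let: (x, y, z) := g in
  (wordlen (x, y, (z - y)%R) + wordlen (x, y, (z + x)%R) +
   wordlen (x, y, (z + y)%R) + wordlen (x, y, (z - x)%R))%N.

Lemma Av_Heis (g : Heis) : Av g = (conj_len_sum g)%:R / 4.
Proof.
case: g => [[x y] z]; rewrite /Av /S !big_cons big_nil addr0 !hconj hinv_ha hinv_hb /=.
by rewrite !(mulr0, mul0r, mulr1, mul1r, mulrN1, mulN1r, addr0, subr0) opprK !natrD !addrA.
Qed.

(* Both sides vanish when the word length is 0, since x / 0 = 0. *)
Lemma kappa_Heis (g : Heis) :
  kappa g = ((4 * wordlen g)%:R - (conj_len_sum g)%:R) / (4 * wordlen g)%:R.
Proof.
rewrite /kappa Av_Heis natrM; have [->|L0] := eqVneq (wordlen g) 0%N.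
  by rewrite mulr0 !invr0 !mulr0.
by field; rewrite pnatr_eq0.
Qed.

Lemma kappa_Heis_gt0 (g : Heis) : (0 < kappa g) = (conj_len_sum g < 4 * wordlen g)%N.
Proof.
rewrite kappa_Heis; have [->|L0] := posnP (wordlen g).
  by rewrite muln0 invr0 mulr0 ltxx.
by rewrite pmulr_lgt0 ?invr_gt0 ?ltr0n ?muln_gt0 // subr_gt0 ltr_nat.
Qed.

Lemma kappa_Heis_lt0 (g : Heis) : (0 < wordlen g)%N ->
  (kappa g < 0) = (4 * wordlen g < conj_len_sum g)%N.
Proof.
by move=> L0; rewrite kappa_Heis pmulr_llt0 ?invr_gt0 ?ltr0n ?muln_gt0 // subr_lt0 ltr_nat.
Qed.

Lemma kappa_Heis_eq0 (g : Heis) : (0 < wordlen g)%N ->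
  (kappa g == 0) = (conj_len_sum g == 4 * wordlen g)%N.
Proof.
move=> L0; rewrite kappa_Heis mulf_eq0 invr_eq0 pnatr_eq0 muln_eq0.
by rewrite (negPf (lt0n_neq0 L0)) !orbF subr_eq0 eqr_nat eq_sym.
Qed.

Lemma conj_len_sum_band_elt (k x y : nat) (c : int) :
  conj_len_sum (band_elt k x y c) =
  (wordlen (band_elt k x y (c - y%:Z)) + wordlen (band_elt k x y (c + x%:Z)) +
   wordlen (band_elt k x y (c + y%:Z)) + wordlen (band_elt k x y (c - x%:Z)))%N.
Proof. by rewrite /conj_len_sum /band_elt !addrA. Qed.

Section Regions.

Variables t k x y : nat.
Hypotheses (xt : (t <= x < 2 * t)%N) (yt : (t <= y < 2 * t)%N) (kt : (5 * t <= k)%N).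

Let k_gt1 : (1 < k)%N. Proof. lia. Qed.
Let x_lt_k : (x < k)%N. Proof. lia. Qed.
Let x_le_k : (x <= k)%N. Proof. lia. Qed.
Let y_le_k : (y <= k)%N. Proof. lia. Qed.

Lemma kappa_band_elt_gt0 (c : int) : 0 < c <= t%:Z -> 0 < kappa (band_elt k x y c).
Proof.
move=> ct; rewrite kappa_Heis_gt0 conj_len_sum_band_elt.
have /(wordlen_band_elt x_le_k y_le_k) L : 0 < c <= k%:Z by lia.
have /(wordlen_band_elt x_le_k y_le_k) Lx : 0 < c + x%:Z <= k%:Z by lia.
have /(wordlen_band_elt x_le_k y_le_k) Ly : 0 < c + y%:Z <= k%:Z by lia.
have /(wordlen_band_elt_below k_gt1 x_lt_k y_le_k) L_x : - k%:Z <= c - x%:Z <= 0 by lia.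
have /(wordlen_band_elt_below k_gt1 x_lt_k y_le_k) L_y : - k%:Z <= c - y%:Z <= 0 by lia.
lia.
Qed.

Lemma kappa_band_elt_lt0 (c : int) : k%:Z - t%:Z < c <= k%:Z -> kappa (band_elt k x y c) < 0.
Proof.
move=> ct; have /(wordlen_band_elt x_le_k y_le_k) L : 0 < c <= k%:Z by lia.
rewrite kappa_Heis_lt0 ?conj_len_sum_band_elt; last by lia.
have /(wordlen_band_elt_above x_le_k y_le_k) Lx : k%:Z < c + x%:Z <= 2 * k%:Z by lia.
have /(wordlen_band_elt_above x_le_k y_le_k) Ly : k%:Z < c + y%:Z <= 2 * k%:Z by lia.
have /(wordlen_band_elt x_le_k y_le_k) L_x : 0 < c - x%:Z <= k%:Z by lia.
have /(wordlen_band_elt x_le_k y_le_k) L_y : 0 < c - y%:Z <= k%:Z by lia.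
lia.
Qed.

Lemma kappa_band_elt_eq0 (c : int) : 2 * t%:Z < c <= 3 * t%:Z -> kappa (band_elt k x y c) = 0.
Proof.
move=> ct; have /(wordlen_band_elt x_le_k y_le_k) L : 0 < c <= k%:Z by lia.
apply/eqP; rewrite kappa_Heis_eq0 ?conj_len_sum_band_elt; last by lia.
have /(wordlen_band_elt x_le_k y_le_k) Lx : 0 < c + x%:Z <= k%:Z by lia.
have /(wordlen_band_elt x_le_k y_le_k) Ly : 0 < c + y%:Z <= k%:Z by lia.
have /(wordlen_band_elt x_le_k y_le_k) L_x : 0 < c - x%:Z <= k%:Z by lia.
have /(wordlen_band_elt x_le_k y_le_k) L_y : 0 < c - y%:Z <= k%:Z by lia.
lia.
Qed.

End Regions.

Lemma band_elt_inj (k k' x x' y y' : nat) (c c' : int) :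
  0 < c <= k%:Z -> 0 < c' <= k'%:Z -> band_elt k x y c = band_elt k' x' y' c' ->
  [/\ k = k', x = x', y = y' & c = c'].
Proof.
move=> ck ck' [-> -> zz']; suff kk' : k = k' by split=> //; move: zz'; rewrite kk'; lia.
have [kk'|kk'|//] := ltngtP k k'.
- have : 0 <= (k'%:Z - k%:Z - 1) * (k'%:Z + k%:Z) by apply: mulr_ge0; lia.
  lia.
- have : 0 <= (k%:Z - k'%:Z - 1) * (k%:Z + k'%:Z) by apply: mulr_ge0; lia.
  lia.
Qed.

Definition region_indices (t : nat) : seq (nat * nat * nat * nat) :=
  [seq (kxy, j) | kxy <- [seq (kx, y) | kx <- [seq (k, x) | k <- iota (5 * t) (5 * t),
                                                            x <- iota t t],
                                        y <- iota t t],
                  j <- iota 1 t].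

Lemma region_indices_uniq t : uniq (region_indices t).
Proof.
by do 3 (apply: allpairs_uniq; rewrite ?iota_uniq //; last by move=> [? ?] [? ?] _ _ [-> ->]).
Qed.

Lemma size_region_indices t : size (region_indices t) = (5 * t ^ 4)%N.
Proof. by rewrite !size_allpairs !size_iota !expnS expn0 muln1 !mulnA. Qed.

Lemma mem_region_indices t k x y j : ((k, x, y), j) \in region_indices t ->
  [/\ (5 * t <= k < 10 * t)%N, (t <= x < 2 * t)%N, (t <= y < 2 * t)%N & (0 < j <= t)%N].
Proof.
case/allpairsP=> [[[[k1 x1] y1] j1] /= [kxy1 jt [-> -> -> ->]]].
case/allpairsP: kxy1 => [[[k2 x2] y2] /= [kx2 y2t [-> -> ->]]].
case/allpairsP: kx2 => [[k3 x3] /= [k3t x3t [-> ->]]].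
by move: k3t x3t y2t jt; rewrite !mem_iota => *; split; lia.
Qed.

Section Counting.

Variables n t : nat.
Hypothesis tn : (40 * t <= n)%N.

Lemma count_band_elt (P : pred Heis) (off : nat -> nat -> int) :
  (forall k, injective (off k)) ->
  (forall k j, (5 * t <= k)%N -> (0 < j <= t)%N -> 0 < off k j <= k%:Z) ->
  (forall k x y j, (5 * t <= k)%N -> (t <= x < 2 * t)%N -> (t <= y < 2 * t)%N ->
     (0 < j <= t)%N -> P (band_elt k x y (off k j))) ->
  (5 * t ^ 4 <= count (fun g => (g != he) && P g) (ball n))%N.
Proof.
move=> off_inj off_band Poff.
pose f (i : nat * nat * nat * nat) := let: (k, x, y, j) := i in band_elt k x y (off k j).
rewrite -size_region_indices -(size_map f) -size_filter.
apply: uniq_leq_size.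
  rewrite map_inj_in_uniq ?region_indices_uniq //.
  move=> [[[k x] y] j] [[[k' x'] y'] j'] /mem_region_indices[/andP[kt _] xt yt jt].
  move=> /mem_region_indices[/andP[k't _] x't y't j't].
  move=> /band_elt_inj[||->->->]; try exact: off_band.
  by move/off_inj->.
move=> _ /mapP[[[[k x] y] j] /mem_region_indices[/andP[kt k10t] xt yt jt] ->].
rewrite mem_filter Poff // andbT; apply/andP; split; first by apply/eqP; case; lia.
rewrite mem_undup; apply: ballList_subset (mem_ballList_band_elt _ _ (off_band _ _ kt jt)); lia.
Qed.

Lemma count_kappa_gt0 :
  (5 * t ^ 4 <= count (fun g => (g != he) && (0 < kappa g)%R) (ball n))%N.
Proof.
apply: (@count_band_elt _ (fun _ j => j%:Z)).
- by move=> k j j' /=; lia.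
- by move=> k j kt jt; lia.
- by move=> k x y j kt xt yt jt; apply: (kappa_band_elt_gt0 xt yt kt); lia.
Qed.

Lemma count_kappa_lt0 :
  (5 * t ^ 4 <= count (fun g => (g != he) && (kappa g < 0)%R) (ball n))%N.
Proof.
apply: (@count_band_elt _ (fun k j => k%:Z + 1 - j%:Z)).
- by move=> k j j' /=; lia.
- by move=> k j kt jt; lia.
- by move=> k x y j kt xt yt jt; apply: (kappa_band_elt_lt0 xt yt kt); lia.
Qed.

Lemma count_kappa_eq0 :
  (5 * t ^ 4 <= count (fun g => (g != he) && (kappa g == 0%R)) (ball n))%N.
Proof.
apply: (@count_band_elt _ (fun _ j => (2 * t + j)%:Z)).
- by move=> k j j' /=; lia.
- by move=> k j kt jt; lia.
- by move=> k x y j kt xt yt jt; rewrite (kappa_band_elt_eq0 xt yt kt) //; lia.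
Qed.

End Counting.

Lemma ballList_box n g : g \in ballList n ->
  `|g.1.1| + `|g.1.2| <= n%:Z /\ `|g.2| <= n%:Z * n%:Z.
Proof.
move=> gn; elim/ballList_ind: n g / gn => [|n g|n [[x y] z] s] //=; first by nia.
by move=> box; rewrite !inE => /or4P[] /eqP->; rewrite /=; nia.
Qed.

Definition zrange (m : nat) : seq int := [seq i%:Z - m%:Z | i <- iota 0 (2 * m + 1)].

Lemma mem_zrange m v : `|v| <= m%:Z -> v \in zrange m.
Proof. by move=> vm; apply/mapP; exists (absz (v + m%:Z)%R); rewrite ?mem_iota; lia. Qed.

Lemma size_ball n : (size (ball n) <= (2 * n + 1) * (2 * n + 1) * (2 * (n * n) + 1))%N.
Proof.
pose box := [seq (xy, z) | xy <- [seq (x, y) | x <- zrange n, y <- zrange n],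
                           z <- zrange (n * n)].
have -> : ((2 * n + 1) * (2 * n + 1) * (2 * (n * n) + 1))%N = size box.
  by rewrite !size_allpairs !size_map !size_iota.
apply: uniq_leq_size; first exact: undup_uniq.
move=> [[x y] z]; rewrite mem_undup => /ballList_box /= [xy_n z_n].
apply/allpairsP; exists ((x, y), z); split=> //=; last by apply: mem_zrange; lia.
by apply/allpairsP; exists (x, y); split=> //=; apply: mem_zrange; lia.
Qed.

Lemma size_ball_gt0 n : (0 < size (ball n))%N.
Proof.
have : he \in ball n by rewrite mem_undup (ballList_subset (leq0n n)) ?inE.
by case: (ball n).
Qed.

Lemma size_ball_le_pow4 : exists2 C : nat, (0 < C)%N &
  forall n t : nat, (0 < n)%N -> (n <= 80 * t)%N -> (size (ball n) <= C * t ^ 4)%N.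
Proof.
exists (27 * 80 ^ 4)%N => [|n t n0 nt]; first by rewrite muln_gt0 expn_gt0.
have := size_ball n.
have : (n * n * n * n <= (80 * t) * (80 * t) * (80 * t) * (80 * t))%N.
  by do 3 apply: leq_mul => //.
rewrite !expnS expn0 !muln1; nia.
Qed.

Lemma count_disjoint3_le (T : Type) (a b c : pred T) (s : seq T) :
  (forall x, a x + b x + c x <= 1)%N -> (count a s + count b s + count c s <= size s)%N.
Proof. by move=> abc; elim: s => //= x s IHs; move: (abc x); lia. Qed.

Lemma propBall_sum n :
  propBall (fun k => k == 0) n + propBall (fun k => 0 < k) n + propBall (fun k => k < 0) n <= 1.
Proof.
rewrite /propBall -!mulrDl ler_pdivrMr ?ltr0n ?size_ball_gt0 // mul1r -!natrD ler_nat.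
by apply: count_disjoint3_le => g; case: (g != he); case: ltgtP.
Qed.

Lemma propBall_ge (P : rat -> bool) (n c C : nat) : (0 < C)%N ->
  (c * size (ball n) <= C * count (fun g => (g != he) && P (kappa g)) (ball n))%N ->
  c%:R / C%:R <= propBall P n.
Proof.
move=> C0 share; rewrite /propBall ler_pdivlMr ?ltr0n ?size_ball_gt0 //.
by rewrite mulrAC ler_pdivrMr ?ltr0n // -!natrM ler_nat (mulnC (count _ _)).
Qed.

Lemma sum3_le1_bounds (R : realFieldType) (e a b c : R) :
  0 < e -> 5 * e <= a -> 5 * e <= b -> 5 * e <= c -> a + b + c <= 1 ->
  [/\ e < a < 1 - e, e < b < 1 - e & e < c < 1 - e].
Proof. by move=> *; split; apply/andP; split; lra. Qed.

Theorem mainTheorem6 :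
  exists eps : rat, (0 < eps)%R /\
  exists N : nat, forall n : nat, (N <= n)%N ->
    [/\ (eps < propBall (fun k => k == 0%R) n < 1 - eps)%R,
        (eps < propBall (fun k => 0 < k)%R n < 1 - eps)%R &
        (eps < propBall (fun k => k < 0)%R n < 1 - eps)%R].
Proof.
have [C C0 size_ball_C] := size_ball_le_pow4.
exists C%:R^-1; split; first by rewrite invr_gt0 ltr0n.
exists 40%N => n n40; pose t := (n %/ 40)%N.
have tn : (40 * t <= n)%N by rewrite mulnC leq_divM.
have share P : (5 * t ^ 4 <= count (fun g => (g != he) && P (kappa g)) (ball n))%N ->
    5%:R / C%:R <= propBall P n.
  move=> count_P; apply: propBall_ge C0 _.
  have : (size (ball n) <= C * t ^ 4)%N by apply: size_ball_C; lia.
  nia.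
apply: (sum3_le1_bounds (e := C%:R^-1)) (propBall_sum n); first by rewrite invr_gt0 ltr0n.
- exact/share/count_kappa_eq0.
- exact/share/count_kappa_gt0.
- exact/share/count_kappa_lt0.
Qed.
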